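(* In a deterministic interest-rate model (as described in the context), if the long Libor rate $L_{0\infty}$ is finite, then for all $t\ge0$ the long Libor rate $L_{t\infty}$ is finite and is given by $L_{t\infty}=P_{0t}L_{0\infty}$.
   Context: A deterministic interest-rate model is given by a deterministic initial discount function $T\mapsto P_{0T}>0$ ($T\ge0$, $P_{00}=1$), with discount bond prices at later times determined by absence of arbitrage as $P_{tT}=P_{0T}/P_{0t}$ for $0\le t<T$. The Libor rate is defined by $P_{tT}=1/[1+(T-t)L_{tT}]$, and the long Libor rate is $L_{t\infty}=\limsup_{T\to\infty}L_{tT}$. *)

From mathcomp Require Import all_boot all_order all_algebra.
From mathcomp Require Import all_classical all_reals all_analysis.
Set Implicit Arguments. Unset Strict Implicit. Unset Printing Implicit Defensive.
Import Order.TTheory GRing.Theory Num.Theory.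
Import numFieldNormedType.Exports.
Local Open Scope ring_scope.

(* Deterministic model: initial discount function P0 : T |-> P_{0T}.
   Bond price at time t for maturity T: P_{tT} = P_{0T} / P_{0t}. *)
Definition bond (R : realType) (P0 : R -> R) (t T : R) : R := P0 T / P0 t.

(* Libor rate, solving P_{tT} = 1 / (1 + (T - t) L_{tT}) for L_{tT} (T > t). *)
Definition libor (R : realType) (P0 : R -> R) (t T : R) : R :=
  ((bond P0 t T)^-1 - 1) / (T - t).

Definition long_libor (R : realType) (P0 : R -> R) (t : R) : \bar R :=
  limf_esup (fun T : R => (libor P0 t T)%:E) (pinfty_nbhs R).

From mathcomp Require Import all_boot all_order all_algebra.
From mathcomp Require Import all_classical all_reals all_analysis.
From mathcomp Require Import ring lra.
Import Order.TTheory GRing.Theory Num.Theory.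
Import numFieldNormedType.Exports.
Local Open Scope ring_scope.
Local Open Scope classical_set_scope.

(* Since P_{tT} = P_{0T} / P_{0t}, one has
   L_{tT} - P_{0t} L_{0T} = (t P_{0t} L_{0T} + P_{0t} - 1) / (T - t).
   Finiteness of L_{0oo}, together with L_{0T} >= -1/T, keeps L_{0T}
   eventually bounded, so this difference tends to 0 as T -> oo.  Functions
   that are eventually uniformly close have the same limsup, and limsup
   commutes with multiplication by the positive constant P_{0t}. *)

Section limf_esup_scale.
Context {R : realType} {U : choiceType} {T : filteredType U} (F : set_system T).
Local Open Scope ereal_scope.

Lemma limf_esupZl (c : R) (f : T -> \bar R) : (0 < c)%R ->
  limf_esup (fun x : T => c%:E * f x) F = c%:E * limf_esup f F.
Proof.
move=> c_gt0; rewrite !limf_esupE -ereal_inf_pZl// image_comp.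
congr ereal_inf; apply/seteqP; split=> _ [V FV <-]; exists V => //=;
  by rewrite -ereal_sup_pZl// image_comp.
Qed.

End limf_esup_scale.

Section limf_esup_filter.
Context {R : realType} {U : choiceType} {T : filteredType U}.
Context (F : set_system T) {FF : Filter F}.
Local Open Scope ereal_scope.

Lemma limf_esup_lt_near (f : T -> \bar R) (a : \bar R) :
  limf_esup f F < a -> \forall x \near F, f x < a.
Proof.
rewrite limf_esupE => /ereal_inf_lt[_ [V FV <-] supVa].
apply: filterS FV => x Vx; apply: le_lt_trans supVa.
by apply: ereal_sup_ubound; exists x.
Qed.

Lemma limf_esup_le_approx (f g : T -> R) :
  (forall e : R, (0 < e)%R -> \forall x \near F, (f x <= g x + e)%R) ->
  limf_esup (fun x : T => (f x)%:E) F <= limf_esup (fun x : T => (g x)%:E) F.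
Proof.
move=> fg; apply/lee_addgt0Pr => e e_gt0; rewrite -leeBlDr//.
rewrite [X in _ <= X]limf_esupE; apply: le_ereal_inf_tmp => _ [V FV <-].
rewrite leeBlDr//.
set W := V `&` [set x | f x <= g x + e]%R.
have FW : F W by apply: filterI => //; exact: fg.
apply: (@le_trans _ _ (ereal_sup [set (f x)%:E | x in W])).
  by rewrite limf_esupE; apply: ereal_inf_lbound; exists W.
apply: ge_ereal_sup => _ [x [Vx fxg] <-].
rewrite (@le_trans _ _ (g x + e)%:E) ?lee_fin// EFinD leeD2r//.
by apply: ereal_sup_ubound; exists x.
Qed.

Lemma limf_esup_eq_approx (f g : T -> R) :
  (forall e : R, (0 < e)%R -> \forall x \near F, (`|f x - g x| <= e)%R) ->
  limf_esup (fun x : T => (f x)%:E) F = limf_esup (fun x : T => (g x)%:E) F.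
Proof.
move=> fg; apply/eqP; rewrite eq_le.
by apply/andP; split; apply: limf_esup_le_approx => e /fg;
  apply: filterS => x; rewrite ler_norml => /andP[]; lra.
Qed.

End limf_esup_filter.

Section deterministic_libor.
Variables (R : realType) (P0 : R -> R).
Hypotheses (P0_gt0 : forall T, 0 <= T -> 0 < P0 T) (P0_0 : P0 0 = 1).

Lemma libor0E T : libor P0 0 T = ((P0 T)^-1 - 1) / T.
Proof. by rewrite /libor /bond P0_0 divr1 subr0. Qed.

Lemma libor0_ge T : 1 <= T -> -1 <= libor P0 0 T.
Proof.
move=> T_ge1; have T_gt0 : 0 < T by lra.
have : 0 <= (P0 T)^-1 by rewrite invr_ge0 ltW// P0_gt0// ltW.
rewrite libor0E ler_pdivlMr// mulN1r; lra.
Qed.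

Lemma libor0_bounded : long_libor P0 0 \is a fin_num ->
  exists M, \forall T \near +oo, `|libor P0 0 T| <= M.
Proof.
move=> /fineK L0E; set L := fine _ in L0E.
have : (long_libor P0 0 < (L + 1)%:E)%E by rewrite -L0E lte_fin ltrDl.
move=> /limf_esup_lt_near ub; exists (`|L| + 1).
near=> T.
have fT_lt : libor P0 0 T < L + 1 by rewrite -lte_fin; near: T.
have /libor0_ge : 1 <= T by near: T; apply: nbhs_pinfty_ge; exact: num_real.
have := normr_ge0 L; have := ler_norm L.
by rewrite ler_norml => *; apply/andP; split; lra.
Unshelve. all: by end_near.
Qed.

Lemma libor_sub_scaled_libor0 t T : 0 <= t -> t < T ->
  libor P0 t T - P0 t * libor P0 0 T =
  (t * (P0 t * libor P0 0 T) + (P0 t - 1)) / (T - t).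
Proof.
move=> t_ge0 tT; have T_gt0 : 0 < T by lra.
have PT_neq0 : P0 T != 0 by rewrite gt_eqF// P0_gt0// ltW.
have T_neq0 : T != 0 by rewrite gt_eqF.
have Tt_neq0 : T - t != 0 by rewrite subr_eq0 gt_eqF.
rewrite libor0E /libor /bond invf_div; field; exact/and3P.
Qed.

Lemma libor_near_scaled_libor0 t : 0 <= t -> long_libor P0 0 \is a fin_num ->
  forall e, 0 < e -> \forall T \near +oo,
    `|libor P0 t T - P0 t * libor P0 0 T| <= e.
Proof.
move=> t_ge0 /libor0_bounded[M bound] e e_gt0.
have p_gt0 : 0 < P0 t by exact: P0_gt0.
set K := t * (P0 t * M) + `|P0 t - 1|.
near=> T.
have tT : K / e + t < T by near: T; apply: nbhs_pinfty_gt; exact: num_real.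
have fT_le : `|libor P0 0 T| <= M by near: T.
have M_ge0 : 0 <= M by exact: le_trans fT_le.
have K_ge0 : 0 <= K by rewrite addr_ge0// !mulr_ge0// ltW.
have Ke_ge0 : 0 <= K / e by rewrite divr_ge0// ltW.
have Tt_gt0 : 0 < T - t by lra.
rewrite libor_sub_scaled_libor0//; last lra.
rewrite normrM [`|(T - t)^-1|]gtr0_norm ?invr_gt0// ler_pdivrMr//.
have num_le : `|t * (P0 t * libor P0 0 T) + (P0 t - 1)| <= K.
  rewrite (le_trans (ler_normD _ _))// normrM (ger0_norm t_ge0).
  by rewrite normrM (gtr0_norm p_gt0) lerD2r; apply: ler_wpM2l; rewrite ?ler_pM2l.
have : K < e * (T - t) by rewrite mulrC -ltr_pdivrMr//; lra.
lra.
Unshelve. all: by end_near.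
Qed.

End deterministic_libor.

Theorem proposition7 (R : realType) (P0 : R -> R)
  (hpos : forall T : R, 0 <= T -> 0 < P0 T) (h0 : P0 0 = 1)
  (hfin : long_libor P0 0 \is a fin_num) :
  forall t : R, 0 <= t ->
    long_libor P0 t \is a fin_num /\
    long_libor P0 t = ((P0 t)%:E * long_libor P0 0)%E.
Proof.
move=> t t_ge0.
have scaled : long_libor P0 t = ((P0 t)%:E * long_libor P0 0)%E.
  rewrite /long_libor -limf_esupZl ?hpos//.
  rewrite (limf_esup_eq_approx _ _ (fun T => P0 t * libor P0 0 T)).
    by under eq_fun do rewrite EFinM.
  exact: libor_near_scaled_libor0.
by rewrite scaled fin_numM// hfin.
Qed.
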